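(* Let $\mathcal{F} = (\mathbb{R}^{d^{L+1}})^{\mathbb{R}^{d^0}}$ with the product topology and usual Borel product $\sigma$-algebra, let $P_{f_n}$ ($n \ge 1$) and $P_f$ be probability distributions on $\mathcal{F}$ with $P_{f_n} \Rightarrow P_f$, let $D = \{(x_i,y_i)\}_{i=1}^m$ be a fixed finite dataset with inputs $\mathcal{X} = \{x_i\}$, and let $\ell \colon \mathbb{R}^{|D| d^{L+1}} \to [0,\infty)$ be a continuous bounded likelihood satisfying the likelihood assumption described in the context, with $\int \ell(f(\mathcal{X}))\,dP_f(f) > 0$. Let $P_{f_n\mid D}$, $P_{f\mid D}$ be the posteriors defined by $\frac{dP_{f_n\mid D}}{dP_{f_n}}(f) = \ell(f(\mathcal{X}))/\int \ell(g(\mathcal{X}))\,dP_{f_n}(g)$ and $\frac{dP_{f\mid D}}{dP_{f}}(f) = \ell(f(\mathcal{X}))/\int \ell(g(\mathcal{X}))\,dP_{f}(g)$. If $h \colon \mathcal{F} \to \mathbb{R}$ is continuous and $\int |h|\, dP_{f_n} \to \int |h| \, dP_f < \infty$, then $$\int h \, dP_{f_n \mid D} \to \int h \, dP_{f\mid D}.$$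
   Context: Here $f(\mathcal{X}) = [f(x)]_{x \in \mathcal{X}} \in \mathbb{R}^{|D| d^{L+1}}$ and $\Rightarrow$ denotes weak convergence ($\int g\,dP_n \to \int g\,dP$ for all continuous bounded real $g$). Likelihood assumption: the targets $\mathcal{Y}=\{y_i\}$ depend on the network parameters and inputs only through the outputs $f_n(\mathcal{X})$; there is a measure $\nu$ with $P_{\mathcal{Y}\mid f_n(\mathcal{X})} \ll \nu$ for every value of $f_n(\mathcal{X})$; and the density $\frac{dP_{\mathcal{Y}\mid f_n(\mathcal{X})}}{d\nu}(\mathcal{Y})$, as a function of $f_n(\mathcal{X})$, equals the same continuous bounded function $\ell$ for all $n$. *)

From HB Require Import structures.
From mathcomp Require Import all_boot all_order all_algebra.
From mathcomp Require Import all_classical all_reals all_analysis.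
Unset Printing Implicit Defensive.
Import Order.TTheory GRing.Theory Num.Theory.
Import numFieldNormedType.Exports.
Local Open Scope classical_set_scope.
Local Open Scope ring_scope.

(* R^k, as functions 'I_k -> R (product topology = Euclidean topology). *)
Notation vecR R k := {ptws 'I_k -> R} (only parsing).

Notation Fsp R d0 dL1 := {ptws vecR R d0 -> vecR R dL1} (only parsing).

Section defs.
Variable R : realType.

(* Generators of the product sigma-algebra on F: preimages of Borel sets of R
   under the coordinate maps f |-> (f x) j. *)
Definition cyl_gen (d0 dL1 : nat) : set (set (Fsp R d0 dL1)) :=
  [set A | exists (x : vecR R d0) (j : 'I_dL1) (B : set R),
           measurable B /\ A = (fun f : Fsp R d0 dL1 => f x j) @^-1` B].

Definition FM (d0 dL1 : nat) := g_sigma_algebraType (cyl_gen d0 dL1).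

(* f(X) for inputs X = (x_i)_{i < m}: an element of R^{m * dL1}. *)
Definition evalX (d0 dL1 m : nat) (X : 'I_m -> vecR R d0) (f : Fsp R d0 dL1)
  : {ptws 'I_m -> vecR R dL1} := fun i => f (X i).

Definition weak_conv (d0 dL1 : nat) (Pn : nat -> probability (FM d0 dL1) R)
  (P : probability (FM d0 dL1) R) : Prop :=
  forall g : Fsp R d0 dL1 -> R,
    continuous g ->
    measurable_fun (setT : set (FM d0 dL1)) g ->
    (exists M : R, forall f, `|g f| <= M) ->
    (fun n => (\int[Pn n]_f (g f)%:E)%E) @ \oo --> (\int[P]_f (g f)%:E)%E.

(* The likelihood assumption: the targets (a point y of a measurable space Y)
   have conditional law K z given the network outputs z = f(X) (so they depend
   on parameters and inputs only through z); K z << nu for every z, and the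
   density d(K z)/d nu, evaluated at the observed y, is ell z. *)
Definition likelihood_assumption (m dL1 : nat) (dY : measure_display)
  (Y : measurableType dY) (nu : {measure set Y -> \bar R})
  (K : {ptws 'I_m -> vecR R dL1} -> probability Y R) (y : Y)
  (ell : {ptws 'I_m -> vecR R dL1} -> R) : Prop :=
  forall z, K z `<< nu /\
    exists dens : Y -> R,
      measurable_fun setT dens /\ (forall t, 0 <= dens t) /\
      (forall A, measurable A -> K z A = (\int[nu]_(t in A) (dens t)%:E)%E) /\
      dens y = ell z.

Definition is_posterior (d0 dL1 m : nat) (X : 'I_m -> vecR R d0)
  (ell : {ptws 'I_m -> vecR R dL1} -> R) (P : probability (FM d0 dL1) R)
  (Q : {measure set FM d0 dL1 -> \bar R}) : Prop :=
  forall A : set (FM d0 dL1), measurable A ->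
    Q A = (\int[P]_(f in A)
             (ell (evalX _ _ _ X f) / Rintegral P setT (fun g => ell (evalX _ _ _ X g)))%:E)%E.

End defs.

Arguments weak_conv {R d0 dL1} Pn P.
Arguments likelihood_assumption {R m dL1 dY Y} nu K y ell.
Arguments is_posterior {R d0 dL1 m} X ell P Q.
Arguments evalX {R d0 dL1 m} X f _.

From HB Require Import structures.
From mathcomp Require Import all_boot all_order all_algebra.
From mathcomp Require Import all_classical all_reals all_analysis.
From mathcomp Require Import measurable_realfun lra.
Import Order.TTheory GRing.Theory Num.Theory.
Import numFieldNormedType.Exports.
Local Open Scope classical_set_scope.
Local Open Scope ring_scope.

(** Write L f = ell (f(X)) and Z_n = \int L dP_n.  As L is bounded and continuous,
    Z_n -> Z > 0, and the densities of the posteriors give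
    \int h dP_{f_n|D} = Z_n^-1 \int h L dP_n.  The integrand h L is continuous
    and dominated by H = M |h|, whose integrals converge to a finite limit.
    Clamping h L to [-k, k] gives bounded continuous functions, to which weak
    convergence applies; the clamping error is at most \int H - \int min(H, k),
    which converges as n -> oo to its value under P, and that value vanishes as
    k -> oo by monotone convergence.
    Since F carries the cylinder sigma-algebra rather than the Borel
    sigma-algebra of the product topology, continuity of L does not give its
    measurability; instead L is the pointwise limit of ell evaluated at grid
    roundings of f(X), each of which takes countably many values on measurable
    cylinders. *)

Lemma cvg_ptws (I : Type) (T : topologicalType) (F : set_system (I -> T))
    {FF : Filter F} (f : {ptws I -> T}) :
  (forall i, (fun g => g i) @ F --> f i) -> F --> f.
Proof.
move=> Fi; apply/cvg_sup => i A [_ [[B oB <-] fB] BA].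
have /Fi FB : nbhs (f i) B by exact: open_nbhs_nbhs.
exact: filterS BA FB.
Qed.

Lemma ptws_proj_continuous {I : Type} {T : topologicalType} (i : I) :
  continuous (fun f : {ptws I -> T} => f i).
Proof.
move=> f; have /cvg_sup/(_ i) fi : nbhs f --> f by exact: cvg_id.
by move=> A /(@initial_continuous _ T (fun g : {ptws I -> T} => g i) f) /fi.
Qed.

Lemma measurable_fun_countable_fibers d d' (T : measurableType d)
    (U : measurableType d') (C : countType) (t : T -> C) (phi : C -> U) :
  (forall c, measurable (t @^-1` [set c])) -> measurable_fun [set: T] (phi \o t).
Proof.
move=> mt _ B mB; rewrite setTI.
have -> : (phi \o t) @^-1` B =
    \bigcup_c (t @^-1` [set c] `&` [set _ | B (phi c)]).
  by apply/seteqP; split => [x Bx|x [c _ [/= <-]]] //; exists (t x).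
apply: countable_bigcupT_measurable => [|c]; first exact: countableP.
have [Bc|nBc] := pselect (B (phi c)).
  suff -> : [set _ : T | B (phi c)] = setT by rewrite setIT.
  by apply/seteqP; split.
suff -> : [set _ : T | B (phi c)] = set0 by rewrite setI0.
by apply/seteqP; split.
Qed.

Section grid.
Context {R : realType}.

Definition grid_index (k : nat) (u : R) : int := Num.floor (k.+1%:R * u).

Lemma cvg_grid (u : R) : (grid_index k u)%:~R / k.+1%:R @[k --> \oo] --> u.
Proof.
have k0 k : 0 < k.+1%:R :> R by [].
apply: (squeeze_cvgr (f := fun k => u - k.+1%:R^-1) (h := cst u)).
- apply: nearW => k; rewrite /grid_index /=.
  have /andP[lo up] := floor_itv (k.+1%:R * u).
  rewrite ler_pdivrMr // [u * _]mulrC lo andbT.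
  rewrite lerBlDr -[X in _ + X]mul1r -mulrDl ler_pdivlMr // mulrC -intrD1.
  exact: ltW.
- rewrite -[X in _ --> X]subr0; apply: cvgB; first exact: cvg_cst.
  exact: cvg_harmonic.
- exact: cvg_cst.
Qed.

Lemma measurable_grid_index_fiber (k : nat) (z : int) :
  measurable [set u : R | grid_index k u = z].
Proof.
have -> : [set u : R | grid_index k u = z] =
    [set: R] `&` ( *%R k.+1%:R) @^-1` `[z%:~R, (z + 1)%:~R[.
  apply/seteqP; split => u /=; rewrite in_itv /=.
    by move=> <-; split => //; exact: floor_itv.
  by move=> [_ /floor_def].
exact: mulrl_measurable.
Qed.

End grid.

Section evaluation_at_inputs.
Context {R : realType} {d0 dL1 m : nat}.
Variable X : 'I_m -> vecR R d0.
Local Notation F := (FM R d0 dL1).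
Local Notation Z := {ptws 'I_m -> vecR R dL1}.

Lemma continuous_evalX : continuous (fun f : Fsp R d0 dL1 => evalX X f : Z).
Proof.
move=> f; have ? : Filter ((fun f => evalX X f : Z) @ nbhs f) by exact: fmap_filter.
apply: cvg_ptws => i; apply: cvg_ptws => j.
by move=> A /(continuous_comp (ptws_proj_continuous (X i) f) (ptws_proj_continuous j _)).
Qed.

Lemma measurable_coord (x : vecR R d0) (j : 'I_dL1) :
  measurable_fun [set: F] (fun f : F => f x j).
Proof.
by move=> _ B mB; rewrite setTI; apply: sub_gen_smallest; exists x, j, B.
Qed.

Definition grid_evalX (k : nat) (f : F) : {ffun 'I_m * 'I_dL1 -> int} :=
  [ffun p => grid_index k (f (X p.1) p.2)].

Definition grid_point (k : nat) (t : {ffun 'I_m * 'I_dL1 -> int}) : Z :=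
  fun i j => (t (i, j))%:~R / k.+1%:R.

Lemma measurable_grid_evalX_fiber k t :
  measurable (grid_evalX k @^-1` [set t]).
Proof.
have -> : grid_evalX k @^-1` [set t] = \bigcap_(p in [set: 'I_m * 'I_dL1])
    ([set: F] `&` (fun f : F => f (X p.1) p.2) @^-1`
       [set u | grid_index k u = t p]).
  apply/seteqP; split => f /=.
    by move=> <- p _; rewrite ffunE.
  by move=> ft; apply/ffunP => p; rewrite ffunE; have [_ ->] := ft p I.
apply: fin_bigcap_measurable => [|p _]; first exact: finite_finset.
by apply: measurable_coord => //; exact: measurable_grid_index_fiber.
Qed.

Lemma cvg_grid_evalX (f : F) :
  grid_point k (grid_evalX k f) @[k --> \oo] --> (evalX X f : Z).
Proof.
apply: cvg_ptws => i; apply: cvg_ptws => j.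
rewrite /grid_point /grid_evalX /=.
move=> A /(cvg_grid (f (X i) j)) [N _ NA]; exists N => // k /NA.
by rewrite /= ffunE.
Qed.

Lemma measurable_comp_evalX {ell : Z -> R} : continuous ell ->
  measurable_fun [set: F] (fun f => ell (evalX X f)).
Proof.
move=> ellc; apply: (measurable_fun_cvg
  (h := fun k => (ell \o grid_point k) \o grid_evalX k)) => [k|f _].
  apply: measurable_fun_countable_fibers; exact: measurable_grid_evalX_fiber.
exact: continuous_cvg (ellc _) (cvg_grid_evalX f).
Qed.

End evaluation_at_inputs.

(* charge.v proves this change of variables only for the Radon-Nikodym
   derivative of a finite measure; here nu is any measure with density g. *)
Section integral_density.
Context {d} {T : measurableType d} {R : realType}.
Context {mu nu : {measure set T -> \bar R}} {g : T -> R}.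
Hypotheses (g0 : forall x, 0 <= g x) (mg : measurable_fun [set: T] g).
Hypothesis nuE : forall A, measurable A -> nu A = (\int[mu]_(x in A) (g x)%:E)%E.

Local Open Scope ereal_scope.
Import HBNNSimple.

Lemma integral_density_nnsfun (h : {nnsfun T >-> R}) E : measurable E ->
  \int[mu]_(x in E) ((h x)%:E * (g x)%:E) = \int[nu]_(x in E) (h x)%:E.
Proof.
move=> mE.
have hE x : (h x)%:E = \sum_(r \in range h) (r * \1_(h @^-1` [set r]) x)%:E.
  by rewrite fsumEFin // -fimfunE.
have mhr r : measurable_fun E (fun x => (r * \1_(h @^-1` [set r]) x)%:E).
  by apply: (measurable_comp measurableT) => //; exact: measurable_funM.
have mgE : measurable_fun E (EFin \o g) by exact/measurable_EFinP/measurable_funTS.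
under [RHS]eq_integral do rewrite hE.
rewrite ge0_integral_fsum //; last by move=> r x _; exact: nnfun_muleindic_ge0.
under eq_integral => x _.
  rewrite hE ge0_mule_fsuml => [|r]; last exact: nnfun_muleindic_ge0.
  over.
rewrite ge0_integral_fsum //; last 2 first.
- by move=> r; apply: emeasurable_funM.
- move=> r x _; apply: mule_ge0; last by rewrite lee_fin.
  exact: nnfun_muleindic_ge0.
apply: eq_fsbigr => r /[!inE] -[x _ <-].
rewrite integralZl_indic_nnsfun //.
under eq_integral do rewrite EFinM -muleA.
rewrite ge0_integralZl ?lee_fin //; last 2 first.
- by apply: emeasurable_funM => //; exact/measurable_EFinP/measurable_indic.
- by move=> y _; rewrite mule_ge0 ?lee_fin.
under eq_integral do rewrite muleC.
rewrite (eq_integral ((EFin \o g) \_ (h @^-1` [set h x]))); last first.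
  by move=> y _; rewrite epatch_indic.
by rewrite -integral_mkcondr -nuE // integral_indic // setIC.
Qed.

Lemma ge0_integral_density (f : T -> \bar R) E : (forall x, 0 <= f x) ->
    measurable E -> measurable_fun E f ->
  \int[mu]_(x in E) (f x * (g x)%:E) = \int[nu]_(x in E) f x.
Proof.
move=> f0 mE mf; pose h := nnsfun_approx mE mf.
have hf x : E x -> (EFin \o h n) x @[n --> \oo] --> f x.
  by move=> Ex; exact: cvg_nnsfun_approx.
have mh n : measurable_fun E (EFin \o h n).
  by apply/measurable_EFinP/measurable_funTS; exact/measurable_funP.
have h0 n x : E x -> 0 <= (EFin \o h n) x by move=> _; rewrite lee_fin.
have nd_h x : E x -> {homo (fun n => (EFin \o h n) x) : m n / (m <= n)%N >-> m <= n}.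
  by move=> _ m n mn; rewrite lee_fin; exact/lefP/nd_nnsfun_approx.
have -> : \int[nu]_(x in E) f x =
    limn (fun n => \int[nu]_(x in E) (EFin \o h n) x).
  rewrite -monotone_convergence //.
  by apply: eq_integral => x /[!inE] Ex; apply/esym/cvg_lim => //; exact: hf.
transitivity (limn (fun n => \int[mu]_(x in E) ((EFin \o h n) x * (g x)%:E))).
  rewrite -monotone_convergence //.
  - apply: eq_integral => x /[!inE] Ex; apply/esym/cvg_lim => //.
    by apply: cvgeZr => //; exact: hf.
  - move=> n; apply: emeasurable_funM => //.
    exact/measurable_EFinP/measurable_funTS.
  - by move=> n x Ex; rewrite mule_ge0 ?lee_fin.
  - move=> x Ex m n mn; rewrite lee_wpmul2r ?lee_fin //.
    exact/lefP/nd_nnsfun_approx.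
by apply: congr_lim; apply/funext => n; exact: integral_density_nnsfun.
Qed.

Lemma integral_density (f : T -> R) : measurable_fun [set: T] f ->
  \int[nu]_x (f x)%:E = \int[mu]_x (f x * g x)%:E.
Proof.
move=> mf; have mEf : measurable_fun setT (EFin \o f) by exact/measurable_EFinP.
rewrite integralE [RHS]integralE.
rewrite -(@ge0_integral_density (EFin \o f)^\+) //; last exact: measurable_funepos.
rewrite -(@ge0_integral_density (EFin \o f)^\-) //; last exact: measurable_funeneg.
congr (_ - _); apply: eq_integral => x _; rewrite !(funeposE, funenegE) /=.
  by rewrite -!EFin_max -EFinM maxr_pMl ?mul0r.
by rewrite -!EFin_max -EFinM maxr_pMl ?mul0r ?mulNr.
Qed.

End integral_density.

Lemma cvgr_approx (R : realType) (u : nat -> R) (l : R)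
    (v e : nat -> nat -> R) (w eps : nat -> R) :
  (forall k, \forall n \near \oo, `|u n - v k n| <= e k n) ->
  (forall k, `|l - w k| <= eps k) ->
  (forall k, v k n @[n --> \oo] --> w k) ->
  (forall k, e k n @[n --> \oo] --> eps k) ->
  eps k @[k --> \oo] --> 0 ->
  u n @[n --> \oo] --> l.
Proof.
move=> uv lw vw ee eps0; apply/cvgrPdist_le => r r0.
have r5 : 0 < r / 5 by rewrite divr_gt0.
have [k _ /(_ k (leqnn k)) /= epsk] := cvgr_dist_le _ _ eps0 _ r5.
near=> n.
have uvn : `|u n - v k n| <= e k n by near: n; exact: uv.
have vwn : `|w k - v k n| <= r / 5 by near: n; exact: (cvgr_dist_le _ _ (vw k) _ r5).
have een : `|eps k - e k n| <= r / 5 by near: n; exact: (cvgr_dist_le _ _ (ee k) _ r5).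
move: uvn vwn een (lw k) epsk; rewrite !ler_norml sub0r.
move=> /andP[? ?] /andP[? ?] /andP[? ?] /andP[? ?] /andP[? ?].
by apply/andP; split; lra.
Unshelve. all: end_near.
Qed.

Section clamp.
Context {R : realFieldType}.

Definition clamp (c u : R) := Num.max (- c) (Num.min u c).

Lemma norm_clamp_le (c u v : R) : `|u| <= v -> 0 <= c ->
  `|clamp c u| <= Num.min v c.
Proof.
rewrite /clamp ler_norml => /andP[uv vu] c0; rewrite ler_norml.
rewrite !minEle; case: (leP u c) => ?; case: (leP v c) => ? /=;
by rewrite maxEle; case: ifP => ?; apply/andP; split; lra.
Qed.

Lemma norm_sub_clamp_le (c u v : R) : `|u| <= v -> 0 <= c ->
  `|u - clamp c u| <= v - Num.min v c.
Proof.
rewrite /clamp ler_norml => /andP[uv vu] c0; rewrite ler_norml.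
rewrite !minEle; case: (leP u c) => ?; case: (leP v c) => ? /=;
by rewrite maxEle; case: ifP => ?; apply/andP; split; lra.
Qed.

End clamp.

Section truncated_integrals.
Context {d} {T : measurableType d} {R : realType} {mu : {measure set T -> \bar R}}.

Lemma ge0_integrable {H : T -> R} : measurable_fun [set: T] H ->
  (forall x, 0 <= H x) -> (\int[mu]_x (H x)%:E < +oo)%E ->
  mu.-integrable [set: T] (EFin \o H).
Proof.
move=> mH H0 HI; apply/integrableP; split; first exact/measurable_EFinP.
by under eq_integral do rewrite /= ger0_norm //.
Qed.

Lemma dominated_integrable {g H : T -> R} : measurable_fun [set: T] g ->
  (forall x, `|g x| <= H x) -> mu.-integrable [set: T] (EFin \o H) ->
  mu.-integrable [set: T] (EFin \o g).
Proof.
move=> mg gH; apply: le_integrable => //; first exact/measurable_EFinP.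
by move=> x _; rewrite /= lee_fin (le_trans (gH x)) ?ler_norm.
Qed.

Context {H : T -> R}.
Hypotheses (mH : measurable_fun [set: T] H) (H0 : forall x, 0 <= H x).
Hypothesis iH : mu.-integrable [set: T] (EFin \o H).

Lemma integrable_minr {c} : 0 <= c ->
  mu.-integrable [set: T] (EFin \o (fun x => Num.min (H x) c)).
Proof.
move=> c0; apply: dominated_integrable iH => [|x]; first exact: measurable_minr.
by rewrite ger0_norm ?ge_min ?lexx // le_min H0.
Qed.

Lemma cvg_Rintegral_minr :
  \int[mu]_x Num.min (H x) k%:R @[k --> \oo] --> \int[mu]_x H x.
Proof.
have mm k : measurable_fun [set: T] (EFin \o (fun x => Num.min (H x) k%:R)).
  by apply/measurable_EFinP; exact: measurable_minr.
have m0 k x : [set: T] x -> (0 <= (Num.min (H x) k%:R)%:E)%E.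
  by move=> _; rewrite lee_fin le_min H0 ler0n.
have nd x : [set: T] x ->
    {homo (fun k => (Num.min (H x) k%:R)%:E) : m n / (m <= n)%N >-> (m <= n)%E}.
  by move=> _ m n mn; rewrite lee_fin le_min !ge_min lexx ler_nat mn !orbT.
have := cvg_monotone_convergence (mu := mu) measurableT mm m0 nd.
have -> : (fun x => limn (fun k => (Num.min (H x) k%:R)%:E)) = EFin \o H.
  apply/funext => x; apply: cvg_lim => //; apply: cvg_near_cst.
  by apply: filterS (nbhs_infty_ger (H x)) => k Hk; rewrite /= min_l.
by rewrite -(fineK (integrable_fin_num _ iH)) // => /fine_cvgP[].
Qed.

Context {g : T -> R}.
Hypotheses (mg : measurable_fun [set: T] g) (gH : forall x, `|g x| <= H x).

Lemma measurable_clamp c : measurable_fun [set: T] (fun x => clamp c (g x)).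
Proof. exact/measurable_maxr/measurable_minr. Qed.

Lemma integrable_clamp {c} : 0 <= c ->
  mu.-integrable [set: T] (EFin \o (fun x => clamp c (g x))).
Proof.
move=> c0; apply: dominated_integrable iH => [|x]; first exact: measurable_clamp.
by rewrite (le_trans (norm_clamp_le _ _ _ (gH x) c0)) ?ge_min ?lexx.
Qed.

Lemma Rintegral_clamp_bound {c} : 0 <= c ->
  `|\int[mu]_x g x - \int[mu]_x clamp c (g x)|
    <= \int[mu]_x H x - \int[mu]_x Num.min (H x) c.
Proof.
move=> c0; have ig := dominated_integrable mg gH iH.
have ic := integrable_clamp c0; have im := integrable_minr c0.
have igc : mu.-integrable [set: T] (EFin \o (fun x => g x - clamp c (g x))).
  by apply: eq_integrable (integrableB _ ig ic) => // x _; rewrite /= EFinB.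
have iHm : mu.-integrable [set: T] (EFin \o (fun x => H x - Num.min (H x) c)).
  by apply: eq_integrable (integrableB _ iH im) => // x _; rewrite /= EFinB.
rewrite -!RintegralB //; apply: le_trans (le_normr_Rintegral _ igc) _ => //.
apply: le_Rintegral => //; first exact: integrable_norm.
by move=> x _; exact: norm_sub_clamp_le.
Qed.

End truncated_integrals.

Lemma near_integrable_cvg {d} {T : measurableType d} {R : realType}
    {mu_ : nat -> {measure set T -> \bar R}} {mu : {measure set T -> \bar R}}
    {H : T -> R} : measurable_fun [set: T] H -> (forall x, 0 <= H x) ->
  (\int[mu_ n]_x (H x)%:E)%E @[n --> \oo] --> (\int[mu]_x (H x)%:E)%E ->
  (\int[mu]_x (H x)%:E < +oo)%E ->
  \forall n \near \oo, (mu_ n).-integrable [set: T] (EFin \o H).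
Proof.
move=> mH H0 + HI; rewrite -(fineK (integrable_fin_num _ (ge0_integrable mH H0 HI))) //.
move=> /fine_cvgP[Hfin _]; apply: filterS Hfin => n /fin_numPlt/andP[_].
exact: ge0_integrable.
Qed.

Section bounded_factor.
Context {d} {T : measurableType d} {R : realType}.
Context {h L : T -> R} {M : R}.
Hypotheses (mh : measurable_fun [set: T] h) (M0 : 0 <= M).

Lemma measurable_scaled_norm : measurable_fun [set: T] (fun x => M * `|h x|).
Proof. by apply: measurable_funM => //; exact: measurableT_comp. Qed.

Lemma integral_scaled_norm (mu : {measure set T -> \bar R}) :
  (\int[mu]_x (M * `|h x|)%:E = M%:E * \int[mu]_x `|h x|%:E)%E.
Proof.
under eq_integral do rewrite EFinM.
by apply: ge0_integralZl_EFin => //; exact/measurable_EFinP/measurableT_comp.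
Qed.

Hypotheses (mL : measurable_fun [set: T] L) (LM : forall x, `|L x| <= M).

Lemma integrable_mul_bounded {mu : {measure set T -> \bar R}} :
  (\int[mu]_x `|h x|%:E < +oo)%E ->
  mu.-integrable [set: T] (EFin \o (fun x => h x * L x)).
Proof.
move=> hfin; apply: (dominated_integrable (H := fun x => M * `|h x|)).
- exact: measurable_funM.
- by move=> x; rewrite normrM mulrC ler_wpM2r.
- apply: ge0_integrable measurable_scaled_norm _ _ => [x|]; first by rewrite mulr_ge0.
  by rewrite integral_scaled_norm lte_mul_pinfty ?lee_fin.
Qed.

Lemma near_integrable_mul_bounded {mu_ : nat -> {measure set T -> \bar R}}
    {mu : {measure set T -> \bar R}} :
  (\int[mu_ n]_x `|h x|%:E)%E @[n --> \oo] --> (\int[mu]_x `|h x|%:E)%E ->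
  (\int[mu]_x `|h x|%:E < +oo)%E ->
  \forall n \near \oo, (mu_ n).-integrable [set: T] (EFin \o (fun x => h x * L x)).
Proof.
move=> habs hfin; have mnh : measurable_fun [set: T] (fun x => `|h x|).
  exact: measurableT_comp.
apply: filterS (near_integrable_cvg mnh (fun x => normr_ge0 (h x)) habs hfin).
by move=> n /(integrable_lty measurableT); exact: integrable_mul_bounded.
Qed.

End bounded_factor.

Section weak_convergence.
Context {R : realType} {d0 dL1 : nat}.
Context {Pn : nat -> probability (FM R d0 dL1) R} {P : probability (FM R d0 dL1) R}.
Hypothesis PnP : weak_conv Pn P.
Local Notation F := (FM R d0 dL1).

Lemma weak_conv_Rintegral {phi : Fsp R d0 dL1 -> R} c : continuous phi ->
    measurable_fun [set: F] phi -> (forall f, `|phi f| <= c) ->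
  \int[Pn n]_f phi f @[n --> \oo] --> \int[P]_f phi f.
Proof.
move=> phic mphi phib.
have iP : P.-integrable [set: F] (EFin \o phi).
  by apply: dominated_integrable mphi phib _; exact: finite_measure_integrable_cst.
have := PnP _ phic mphi (ex_intro _ c phib).
by rewrite -(fineK (integrable_fin_num _ iP)) // => /fine_cvgP[].
Qed.

Lemma weak_conv_dominated {H g : Fsp R d0 dL1 -> R} :
  continuous H -> measurable_fun [set: F] H ->
  (fun n => \int[Pn n]_f (H f)%:E)%E @ \oo --> (\int[P]_f (H f)%:E)%E ->
  (\int[P]_f (H f)%:E < +oo)%E ->
  continuous g -> measurable_fun [set: F] g -> (forall f, `|g f| <= H f) ->
  (fun n => \int[Pn n]_f (g f)%:E)%E @ \oo --> (\int[P]_f (g f)%:E)%E.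
Proof.
move=> Hc mH HPn HP gc mg gH.
have H0 f : 0 <= H f := le_trans (normr_ge0 _) (gH f).
have iHP := ge0_integrable mH H0 HP.
have iHPn := near_integrable_cvg mH H0 HPn HP.
have igP := dominated_integrable mg gH iHP.
rewrite -(fineK (integrable_fin_num _ iHP)) // in HPn.
move/fine_cvgP: HPn => [_ HPn].
have minc k : continuous (fun f => Num.min (H f) k%:R).
  by apply: min_fun_continuous => //; exact: cst_continuous.
have clampc k : continuous (fun f => clamp k%:R (g f)).
  apply: max_fun_continuous; first exact: cst_continuous.
  by apply: min_fun_continuous => //; exact: cst_continuous.
rewrite -(fineK (integrable_fin_num _ igP)) //; apply/fine_cvgP; split.
  apply: filterS iHPn => n iH.
  exact/integrable_fin_num/(dominated_integrable mg gH iH).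
apply: (@cvgr_approx _ _ _
  (fun k n => \int[Pn n]_f clamp k%:R (g f))
  (fun k n => \int[Pn n]_f H f - \int[Pn n]_f Num.min (H f) k%:R)).
- move=> k; apply: filterS iHPn => n iH.
  exact (Rintegral_clamp_bound mH H0 iH mg gH (ler0n _ k)).
- move=> k; exact (Rintegral_clamp_bound mH H0 iHP mg gH (ler0n _ k)).
- move=> k; apply: (weak_conv_Rintegral k%:R (clampc k) (measurable_clamp mg _)) => f.
  apply: le_trans (norm_clamp_le _ _ _ (gH f) (ler0n _ k)) _.
  by rewrite ge_min lexx orbT.
- move=> k; apply: cvgB => //.
  apply: (weak_conv_Rintegral k%:R (minc k) (measurable_minr mH (measurable_cst _))) => f.
  by rewrite ger0_norm ?ge_min ?lexx ?orbT // le_min H0 ler0n.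
- rewrite -(subrr (\int[P]_f H f)); apply: cvgB; first exact: cvg_cst.
  exact: cvg_Rintegral_minr.
Qed.

Lemma weak_conv_mul_bounded {h L : Fsp R d0 dL1 -> R} {M : R} :
  continuous h -> measurable_fun [set: F] h ->
  continuous L -> measurable_fun [set: F] L -> (forall f, `|L f| <= M) ->
  (fun n => \int[Pn n]_f (`|h f|)%:E)%E @ \oo --> (\int[P]_f (`|h f|)%:E)%E ->
  (\int[P]_f (`|h f|)%:E < +oo)%E ->
  (fun n => \int[Pn n]_f (h f * L f)%:E)%E @ \oo --> (\int[P]_f (h f * L f)%:E)%E.
Proof.
move=> hc mh Lc mL LM habs hfin.
have M0 : 0 <= M := le_trans (normr_ge0 _) (LM point).
apply: (weak_conv_dominated (H := fun f => M * `|h f|)).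
- move=> f; apply: (continuousM (@cst_continuous _ _ M f)).
  exact: continuous_comp (hc f) (@norm_continuous _ _ _).
- exact: measurable_scaled_norm mh.
- rewrite (integral_scaled_norm mh M0).
  by under eq_fun do rewrite (integral_scaled_norm mh M0); exact: cvgeZl.
- by rewrite (integral_scaled_norm mh M0) lte_mul_pinfty ?lee_fin.
- by move=> f; exact: continuousM (hc f) (Lc f).
- exact: measurable_funM.
- by move=> f; rewrite normrM mulrC ler_wpM2r.
Qed.

End weak_convergence.

Section posterior.
Context {R : realType} {d0 dL1 m : nat} {X : 'I_m -> vecR R d0}.
Context {ell : {ptws 'I_m -> vecR R dL1} -> R} {P : probability (FM R d0 dL1) R}.
Context {Q : {measure set FM R d0 dL1 -> \bar R}}.
Hypotheses (ell0 : forall z, 0 <= ell z) (ellc : continuous ell).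
Hypothesis QP : is_posterior X ell P Q.
Local Notation F := (FM R d0 dL1).
Local Notation L := (fun f : F => ell (evalX X f)).

(* No positivity of \int L dP is needed: if it vanishes, so does the density
   L / \int L dP (as x / 0 = 0), and both sides are 0. *)
Lemma integral_posterior (h : F -> R) : measurable_fun [set: F] h ->
    P.-integrable [set: F] (EFin \o (fun f => h f * L f)) ->
  (\int[Q]_f (h f)%:E = ((\int[P]_f L f)^-1 * \int[P]_f (h f * L f))%:E)%E.
Proof.
move=> mh ihL; have mL := measurable_comp_evalX X ellc.
rewrite (integral_density (mu := P) (g := fun f => L f / \int[P]_g L g)) //.
- under eq_integral do rewrite mulrA mulrC EFinM.
  rewrite integralZl // EFinM fineK //; exact: integrable_fin_num.
- by move=> f; rewrite divr_ge0 // Rintegral_ge0.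
- by apply: measurable_funM => //; exact: measurable_cst.
Qed.

End posterior.

Theorem corollary1 (R : realType) (d0 dL1 m : nat)
  (Pn : nat -> probability (FM R d0 dL1) R) (P : probability (FM R d0 dL1) R)
  (X : 'I_m -> vecR R d0)
  (dY : measure_display) (Y : measurableType dY) (y : Y)
  (nu : {measure set Y -> \bar R})
  (K : {ptws 'I_m -> vecR R dL1} -> probability Y R)
  (ell : {ptws 'I_m -> vecR R dL1} -> R)
  (Qn : nat -> {measure set FM R d0 dL1 -> \bar R})
  (Q : {measure set FM R d0 dL1 -> \bar R})
  (h : Fsp R d0 dL1 -> R) :
  weak_conv Pn P ->
  continuous ell ->
  (forall z, 0 <= ell z) ->
  (exists M : R, forall z, ell z <= M) ->
  likelihood_assumption nu K y ell ->
  (0 < \int[P]_f (ell (evalX X f))%:E)%E ->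
  (forall n, is_posterior X ell (Pn n) (Qn n)) ->
  is_posterior X ell P Q ->
  continuous h ->
  measurable_fun (setT : set (FM R d0 dL1)) h ->
  (fun n => \int[Pn n]_f (`|h f|)%:E)%E @ \oo --> (\int[P]_f (`|h f|)%:E)%E ->
  (\int[P]_f (`|h f|)%:E < +oo)%E ->
  (fun n => \int[Qn n]_f (h f)%:E)%E @ \oo --> (\int[Q]_f (h f)%:E)%E.
Proof.
(* The likelihood assumption only motivates the shape of the posterior, which
   is_posterior already prescribes. *)
move=> PnP ellc ell0 [M ellM] _ ZP Qn_post Q_post hc mh habs hfin.
pose L f := ell (evalX X f).
have Lc : continuous L := fun f => continuous_comp (continuous_evalX X f) (ellc _).
have mL : measurable_fun [set: FM R d0 dL1] L := measurable_comp_evalX X ellc.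
have M0 : 0 <= M := le_trans (ell0 (fun _ _ => 0)) (ellM _).
have LM f : `|L f| <= M by rewrite /L ger0_norm ?ellM ?ell0.
have ZnZ := weak_conv_Rintegral PnP M Lc mL LM.
have Z0 : 0 < \int[P]_f L f.
  have iL : P.-integrable [set: FM R d0 dL1] (EFin \o L).
    by apply: dominated_integrable mL LM _; exact: finite_measure_integrable_cst.
  by rewrite -lte_fin fineK //; exact: integrable_fin_num.
have ihLP := integrable_mul_bounded mh M0 mL LM hfin.
have ihLPn := near_integrable_mul_bounded mh M0 mL LM habs hfin.
have := weak_conv_mul_bounded PnP hc mh Lc mL LM habs hfin.
rewrite -(fineK (integrable_fin_num _ ihLP)) // => /fine_cvgP[_ hLPn].
have QnE : \forall n \near \oo, ((\int[Pn n]_f L f)^-1 * \int[Pn n]_f (h f * L f))%:E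
    = (\int[Qn n]_f (h f)%:E)%E.
  apply: filterS ihLPn => n ihL.
  by rewrite (integral_posterior ell0 ellc (Qn_post n) _ mh).
rewrite (integral_posterior ell0 ellc Q_post _ mh) //.
apply: cvg_trans (near_eq_cvg QnE) _.
apply/fine_cvgP; split; first exact: nearW.
by apply: cvgM => //; apply: cvgV => //; rewrite gt_eqF.
Qed.
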